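(* Let $(G,\mathcal{C})$ be a 2-colored graph, $G=(V,E)$, and $l,u:E\to\mathbb{N}$ with $l\le u$. Suppose $f\in\mathcal{A}(G,\mathcal{C})\cap\mathbb{N}^E$ is infeasible, but $\mathcal{A}(G,\mathcal{C})\cap\mathbb{N}^E$ contains a feasible vector. Then for each $e\in E$: (i) if $f(e)<l(e)$, then $G(f)$ has a CAT through $e_1$; (ii) if $f(e)>u(e)$, then $G(f)$ has a CAT through $e_3$.
   Context: Graphs are finite, undirected, may have parallel edges but no loops; $\mathcal{C}:E\to\{R,B\}$ is a red/blue coloring. The alternating cone $\mathcal{A}(G,\mathcal{C})\subseteq\mathbb{R}^E$ consists of $x\ge0$ with, at every vertex, the sum of $x$ over incident red edges equal to the sum over incident blue edges. A vector $f\in\mathcal{A}(G,\mathcal{C})$ is feasible if $l(e)\le f(e)\le u(e)$ for all $e$, infeasible otherwise. The residual 2-colored graph $G(f)=(V,E(f))$ of $f\in\mathcal{A}(G,\mathcal{C})\cap\mathbb{N}^E$ w.r.t. $l,u$: take four disjoint copies $e_1,e_2,e_3,e_4$ of each $e\in E$ (each with the same endpoints as $e$); $e_1\in E(f)$ with color $\mathcal{C}(e)$ iff $f(e)\le u(e)-1$; $e_2\in E(f)$ with color $\mathcal{C}(e)$ iff $f(e)\le u(e)-2$; $e_3\in E(f)$ with the color opposite to $\mathcal{C}(e)$ iff $f(e)\ge l(e)+1$; $e_4\in E(f)$ with the color opposite to $\mathcal{C}(e)$ iff $f(e)\ge l(e)+2$. A CAT (closed alternating trail) is a walk $(v_0,a_1,v_1,\dots,a_m,v_m)$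 with $v_0=v_m$, distinct edges $a_1,\dots,a_m$, consecutive edges of different colors, and $a_m$, $a_1$ of different colors; it is through an edge if that edge is among the $a_j$. *)

From mathcomp Require Import all_boot.
Set Implicit Arguments. Unset Strict Implicit. Unset Printing Implicit Defensive.

Section Defs.
Variables (V E : finType) (ends : E -> V * V) (col : E -> bool).
(* col e = true means e is red, false means blue. *)

Definition joins (p : V * V) (u v : V) : bool :=
  ((p.1 == u) && (p.2 == v)) || ((p.1 == v) && (p.2 == u)).

Definition incident (e : E) (v : V) : bool := (v == (ends e).1) || (v == (ends e).2).

Definition alternating (f : E -> nat) : Prop :=
  forall v : V, \sum_(e | incident e v && col e) f e
              = \sum_(e | incident e v && ~~ col e) f e.

Definition feasible (l u f : E -> nat) : Prop := forall e, l e <= f e <= u e.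
End Defs.

(* A CAT in a 2-colored multigraph with edge type F, endpoint map endsF,
   edge-presence predicate present and coloring colF: the walk
   (v0, a1, v1, ..., am, vm) is encoded as v0 and s = [:: (a1,v1); ...; (am,vm)]. *)
Definition is_CAT (V F : finType) (endsF : F -> V * V) (present : pred F)
    (colF : F -> bool) (v0 : V) (s : seq (F * V)) : bool :=
  if s is p1 :: _ then
    [&& last v0 (map snd s) == v0,
        uniq (map fst s),
        all (fun p => present p.1) s,
        all (fun q => joins (endsF q.2.1) q.1 q.2.2) (zip (v0 :: map snd s) s),
        sorted (fun a b => colF a != colF b) (map fst s) &
        colF (last p1.1 (map fst s)) != colF p1.1]
  else false.

(* Residual 2-colored graph G(f): edge (e, i) with i : 'I_4 is the copy e_{i+1}. *)
Section Residual.
Variables (V E : finType) (ends : E -> V * V) (col : E -> bool) (l u f : E -> nat).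

Definition res_ends (x : E * 'I_4) : V * V := ends x.1.

Definition res_present (x : E * 'I_4) : bool :=
  let e := x.1 in
  match val x.2 with
  | 0 => f e + 1 <= u e
  | 1 => f e + 2 <= u e
  | 2 => l e + 1 <= f e
  | _ => l e + 2 <= f e
  end.

Definition res_col (x : E * 'I_4) : bool :=
  if val x.2 < 2 then col x.1 else ~~ col x.1.

Definition res_CAT_through (x : E * 'I_4) : Prop :=
  exists (v0 : V) (s : seq ((E * 'I_4) * V)),
    is_CAT res_ends res_present res_col v0 s && (x \in map fst s).
End Residual.

From mathcomp Require Import all_boot zify.

Set Implicit Arguments.
Unset Strict Implicit.
Unset Printing Implicit Defensive.

(* Fix a feasible g in the cone and give each edge b multiplicity |g b - f b|,
   with the colour of b if f b < g b and the opposite colour otherwise.  Since f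
   and g are both balanced, so is this multigraph.  In a balanced 2-coloured
   multigraph, an alternating trail that has not closed up can always be
   extended at its endpoint, so any edge of positive multiplicity lies on a
   closed alternating trail.  If the trail passes twice through the same edge in
   the same direction, it splits into two shorter closed alternating trails, one
   of which still contains the given edge; so we may assume each edge is
   traversed at most once in each direction.  Sending the first direction used
   on each edge to its copy e_1 (or e_3 when f b > g b) and the other one to
   e_2 (or e_4) maps the trail to a CAT of G(f); these copies are present
   because l <= g <= u.  Finally f e < l e <= g e, resp. g e <= u e < f e, so e
   has positive multiplicity and is mapped to e_1, resp. e_3. *)

Lemma sum_nat_eqb (T : finType) (P : pred T) (b : T) :
  \sum_(i | P i) (b == i : nat) = P b.
Proof.
case Pb: (P b); last first.
  by rewrite big1 // => i Pi; case: eqP => // bi; rewrite bi Pi in Pb.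
rewrite (bigD1 b) //= eqxx big1 // => i /andP[_].
by rewrite eq_sym => /negPf ->.
Qed.

Lemma sum_count_mem (T : finType) (s : seq T) :
  \sum_(b : T) count_mem b s = size s.
Proof.
elim: s => [|a s IH] /=; first by rewrite big1.
by rewrite big_split /= sum_nat_eqb IH add1n.
Qed.

Lemma not_uniq_split (T : eqType) (s : seq T) :
  ~~ uniq s -> exists z P Q R, s = P ++ z :: Q ++ z :: R.
Proof.
elim: s => [|h s IH] //=; rewrite negb_and negbK.
case/orP => [/splitPr[Q R] | /IH[z [P [Q [R ->]]]]].
  by exists h, [::], Q, R.
by exists z, (h :: P), Q, R.
Qed.

Section Walks.
Variables (V E : finType) (ends : E -> V * V).

Fixpoint walk (v : V) (s : seq (E * V)) : bool :=
  if s is p :: s' then joins (ends p.1) v p.2 && walk p.2 s' else true.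

Lemma walk_cat v s1 s2 :
  walk v (s1 ++ s2) = walk v s1 && walk (last v (map snd s1)) s2.
Proof. by elim: s1 v => [|p s1 IH] v //=; rewrite IH andbA. Qed.

Lemma walk_rcons v s p :
  walk v (rcons s p) = walk v s && joins (ends p.1) (last v (map snd s)) p.2.
Proof. by rewrite -cats1 walk_cat /= andbT. Qed.

Lemma walk_zipE v s :
  walk v s = all (fun q => joins (ends q.2.1) q.1 q.2.2) (zip (v :: map snd s) s).
Proof. by elim: s v => [|p s IH] v //=; rewrite IH. Qed.

Lemma joins_incident b v z : joins (ends b) v z -> incident ends b z.
Proof. by case/orP => /andP[/eqP e1 /eqP e2]; rewrite /incident -?e1 -?e2 eqxx ?orbT. Qed.

Lemma walk_incident v s p : walk v s -> p \in s -> incident ends p.1 p.2.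
Proof.
elim: s v => [|q s IH] v //= /andP[vq qs]; rewrite inE => /orP[/eqP -> | ps].
  exact: joins_incident vq.
exact: IH qs ps.
Qed.

Hypothesis noloop : forall b, (ends b).1 != (ends b).2.

Lemma joins_incidentE b v z w :
  joins (ends b) v z -> incident ends b w = (w == v) || (w == z).
Proof. by case/orP => /andP[/eqP e1 /eqP e2]; rewrite /incident e1 e2 // orbC. Qed.

Lemma joins_neq b v z : joins (ends b) v z -> v != z.
Proof.
move=> vz; have := noloop b.
by case/orP: vz => /andP[/eqP <- /eqP <-] //; rewrite eq_sym.
Qed.

Lemma joins_inj b v v' z : joins (ends b) v z -> joins (ends b) v' z -> v = v'.
Proof.
rewrite /joins; have := noloop b; case: (ends b) => e1 e2 /= ne.
case/orP => /andP[/eqP ? /eqP ?]; case/orP => /andP[/eqP ? /eqP ?]; subst => //.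
all: by rewrite eqxx in ne.
Qed.

Lemma incident_eq b w w' d : incident ends b w -> incident ends b w' ->
  incident ends b d -> (w != d) = (w' != d) -> w = w'.
Proof.
have := noloop b; rewrite /incident.
move=> ne /orP[]/eqP-> /orP[]/eqP-> /orP[]/eqP->; rewrite ?eqxx // ?(negPf ne) //.
all: by rewrite eq_sym (negPf ne).
Qed.

End Walks.

Lemma walk_relabel (V E F : finType) (ends : E -> V * V) (endsF : F -> V * V)
    (phi : E * V -> F) v s :
  (forall p, endsF (phi p) = ends p.1) ->
  walk endsF v [seq (phi p, p.2) | p <- s] = walk ends v s.
Proof. by move=> phiE; elim: s v => [|p s IH] v //=; rewrite phiE IH. Qed.

Section AlternatingTrails.
Variables (V E : finType) (ends : E -> V * V) (c : E -> bool) (m : E -> nat).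
Hypothesis noloop : forall b, (ends b).1 != (ends b).2.

Definition within_capacity (s : seq (E * V)) :=
  [forall b, count_mem b (map fst s) <= m b].

Definition alt_trail (x : V) (s : seq (E * V)) :=
  [&& walk ends x s, sorted (fun a b => c a != c b) (map fst s) & within_capacity s].

Definition closes (x : V) (s : seq (E * V)) :=
  if s is p :: _ then (last x (map snd s) == x) && (c (last p.1 (map fst s)) != c p.1)
  else false.

Definition closed_alt_trail x s := alt_trail x s && closes x s.

Lemma within_capacity_subseq s1 s2 :
  subseq s1 s2 -> within_capacity s2 -> within_capacity s1.
Proof.
move=> sub /forallP s2m; apply/forallP => b; apply: leq_trans (s2m b).
exact/leq_count_subseq/map_subseq.
Qed.

Definition traversals (s : seq (E * V)) (w : V) (d : bool) :=
  \sum_(b | incident ends b w && (c b == d)) count_mem b (map fst s).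

Lemma traversals_rcons s p w d :
  traversals (rcons s p) w d = traversals s w d + (incident ends p.1 w && (c p.1 == d)).
Proof.
rewrite /traversals map_rcons.
under eq_bigr => b _ do rewrite -cats1 count_cat /= addn0.
by rewrite big_split /= sum_nat_eqb.
Qed.

(* Each inner visit of w uses one edge of each colour, so only the two ends of
   the trail unbalance the colours at w. *)
Lemma traversals_balance x a y s :
  walk ends x ((a, y) :: s) -> sorted (fun a b => c a != c b) (a :: map fst s) ->
  forall w d,
    traversals ((a, y) :: s) w d + ((w == x) && (c a != d))
      + ((w == last y (map snd s)) && (c (last a (map fst s)) != d))
    = traversals ((a, y) :: s) w (~~ d) + ((w == x) && (c a == d))
      + ((w == last y (map snd s)) && (c (last a (map fst s)) == d)).
Proof.
elim/last_ind: s => [|s [b z] IH].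
  move=> /= /andP[xy _] _ w d.
  rewrite -[[:: _]]/(rcons [::] (a, y)) !traversals_rcons /traversals !big1 //=.
  have : ~~ ((w == x) && (w == y)).
    by apply: contraNN (joins_neq noloop xy) => /andP[/eqP <- /eqP <-].
  rewrite (joins_incidentE _ xy).
  by case: (w == x); case: (w == y); case: (c a); case: d.
rewrite -rcons_cons walk_rcons map_rcons /= rcons_path !map_rcons !last_rcons.
case/andP=> xs zb /andP[alt_s alt_b] w d; rewrite -rcons_cons !traversals_rcons.
have : ~~ ((w == last y (map snd s)) && (w == z)).
  by apply: contraNN (joins_neq noloop zb) => /andP[/eqP <- /eqP <-].
move: (IH xs alt_s w d) alt_b; rewrite (joins_incidentE _ zb) /=.
move: (traversals _ w d) (traversals _ w (~~ d)) => T1 T2.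
case: (w == last y _); case: (w == z); case: (w == x);
  case: (c b); case: (c (last a _)); case: d; case: (c a) => //=; lia.
Qed.

Lemma alt_trail_size x s : alt_trail x s -> size s <= \sum_b m b.
Proof.
case/and3P=> _ _ /forallP s_m.
by rewrite -(size_map fst) -sum_count_mem; apply: leq_sum => b _; apply: s_m.
Qed.

Lemma closed_alt_trail_excise x P Q R b w :
  closed_alt_trail x (P ++ (b, w) :: Q ++ (b, w) :: R) ->
  closed_alt_trail x (P ++ (b, w) :: R).
Proof.
case/andP=> /and3P[walk_s alt_s cap_s] closes_s; apply/andP; split; [apply/and3P; split|].
- move: walk_s; rewrite !walk_cat /= walk_cat /= => /and5P[-> uw _ u'w ->].
  by rewrite (joins_inj noloop uw u'w) u'w.
- move: alt_s; rewrite !map_cat /= map_cat !sorted_cat_cons /= cat_path /=.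
  by case/andP=> -> /and3P[_ _ ->].
- apply: within_capacity_subseq cap_s.
  by rewrite cat_subseq // -cat_cons suffix_subseq.
- move: closes_s; case: P {walk_s alt_s cap_s} => [|p P] /=;
    by do 2 rewrite ?(map_cat, last_cat) /=.
Qed.

Lemma closed_alt_trail_loop x P Q R b w :
  closed_alt_trail x (P ++ (b, w) :: Q ++ (b, w) :: R) ->
  closed_alt_trail w (rcons Q (b, w)).
Proof.
case/andP=> /and3P[walk_s alt_s cap_s] _.
move: walk_s alt_s; rewrite walk_cat /= walk_cat /= map_cat /= map_cat.
rewrite sorted_cat_cons /= cat_path /= => /and5P[_ _ walk_Q u'w _].
case/and3P=> _ alt_Q /andP[alt_Qb _].
case: Q walk_Q alt_Q alt_Qb u'w cap_s => [|q Q] walk_Q alt_Q alt_Qb u'w cap_s.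
  by move: alt_Qb; rewrite /= eqxx.
move: alt_Q => /= /andP[alt_bq alt_Q].
apply/andP; split; [apply/and3P; split|].
- by rewrite -rcons_cons walk_rcons walk_Q.
- by rewrite /= map_rcons rcons_path alt_Q.
- apply: within_capacity_subseq cap_s.
  have -> : P ++ (b, w) :: (q :: Q) ++ (b, w) :: R
            = (P ++ [:: (b, w)]) ++ rcons (q :: Q) (b, w) ++ R.
    by rewrite -cats1 -!catA.
  exact: cat_subseq (sub0seq _) (prefix_subseq _ _).
- by rewrite /= !map_rcons !last_rcons eqxx.
Qed.

Lemma closed_alt_trail_shorten x P Q R b w e0 :
  let s := P ++ (b, w) :: Q ++ (b, w) :: R in
  closed_alt_trail x s -> e0 \in map fst s ->
  exists x' s', [&& closed_alt_trail x' s', e0 \in map fst s' & size s' < size s].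
Proof.
move=> s trail_s e0s.
have [e0PR | e0Q] :
    e0 \in map fst (P ++ (b, w) :: R) \/ e0 \in map fst (rcons Q (b, w)).
  move: e0s; rewrite !map_cat /= map_cat map_rcons mem_rcons !(mem_cat, inE).
  by case: (e0 \in map fst P); case: (e0 == b); case: (e0 \in map fst Q); auto.
- exists x, (P ++ (b, w) :: R).
  by rewrite (closed_alt_trail_excise trail_s) e0PR /s !size_cat /= size_cat /=; lia.
- exists w, (rcons Q (b, w)).
  by rewrite (closed_alt_trail_loop trail_s) e0Q /s size_rcons !size_cat /= size_cat /=; lia.
Qed.

Lemma closed_alt_trail_uniq x s e0 :
  closed_alt_trail x s -> e0 \in map fst s ->
  exists x' s', [&& closed_alt_trail x' s', e0 \in map fst s' & uniq s'].
Proof.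
elim: {s}(size s).+1 {-2}s (ltnSn (size s)) x => // n IH s size_s x trail_s e0s.
have [uniq_s | /not_uniq_split[[b w] [P [Q [R def_s]]]]] := boolP (uniq s).
  by exists x, s; rewrite trail_s e0s uniq_s.
rewrite def_s in trail_s e0s size_s.
have [x' [s' /and3P[trail_s' e0s' size_s']]] := closed_alt_trail_shorten trail_s e0s.
by apply: (IH s' _ x') => //; apply: leq_trans size_s' _.
Qed.

Hypothesis m_alternating : alternating ends c m.

Lemma alternating_colour w d :
  \sum_(b | incident ends b w && (c b == d)) m b
  = \sum_(b | incident ends b w && (c b == ~~ d)) m b.
Proof.
have colE d' b : (c b == d') = (if d' then c b else ~~ c b) by case: d'; case: (c b).
rewrite !(eq_bigl _ _ (fun b => congr1 (andb _) (colE _ b))).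
by case: d; rewrite m_alternating.
Qed.

(* By [traversals_balance], an open trail ending at L with an edge of colour C
   has used one more edge of colour C than of colour ~~ C at L; as m is balanced
   at L, some edge of colour ~~ C at L still has spare capacity. *)
Lemma alt_trail_extend x a y s :
  alt_trail x ((a, y) :: s) -> ~~ closes x ((a, y) :: s) ->
  exists p, alt_trail x ((a, y) :: rcons s p).
Proof.
set L := last y (map snd s); set C := c (last a (map fst s)).
move=> trail_s open_s.
have [/existsP[b /and3P[bL bC b_free]] | saturated] := boolP [exists b,
  [&& incident ends b L, c b == ~~ C & count_mem b (map fst ((a, y) :: s)) < m b]].
  pose z := if (ends b).1 == L then (ends b).2 else (ends b).1.
  have Lz : joins (ends b) L z.
    move: bL; rewrite /z /joins /incident eq_sym.
    by case: ((ends b).1 =P L) => [-> | _] /=; rewrite ?eqxx // eq_sym => ->.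
  exists (b, z); case/and3P: trail_s => walk_s alt_s /forallP cap_s.
  apply/and3P; split.
  - by rewrite -rcons_cons walk_rcons walk_s.
  - move: alt_s; rewrite /= map_rcons rcons_path => ->.
    by rewrite (eqP bC) -/C; case: (C).
  - apply/forallP => b'; have := cap_s b'; rewrite -rcons_cons map_rcons -cats1 count_cat /=.
    by move: b_free; case: (b =P b') => [<- | _] /=; lia.
case/and3P: trail_s => walk_s alt_s /forallP cap_s.
have used_C : traversals ((a, y) :: s) L C <= \sum_(b | incident ends b L && (c b == C)) m b.
  by apply: leq_sum => b _; apply: cap_s.
have used_notC : \sum_(b | incident ends b L && (c b == ~~ C)) m b
                 <= traversals ((a, y) :: s) L (~~ C).
  apply: leq_sum => b /andP[bL bC]; rewrite leqNgt.
  by apply: contraNN saturated => b_free; apply/existsP; exists b; rewrite bL bC.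
have bal_L := traversals_balance walk_s alt_s L C.
rewrite -/L -/C !eqxx /= in bal_L.
have col_L := alternating_colour L C.
move: open_s; rewrite /closes /= -/L -/C (eq_sym C) => open_s.
by exfalso; move: open_s bal_L; case: (L == x); case: (c a == C) => //=; lia.
Qed.

Lemma closed_alt_trail_through e0 :
  0 < m e0 -> exists x s, closed_alt_trail x s && (e0 \in map fst s).
Proof.
move=> m_e0; set x := (ends e0).1; set y := (ends e0).2.
suff [// | [s /andP[trail_s size_s]]] : (exists x s, closed_alt_trail x s && (e0 \in map fst s))
    \/ exists s, alt_trail x ((e0, y) :: s) && (\sum_b m b <= size s).
  by have := alt_trail_size trail_s; rewrite /=; lia.
elim: (\sum_b m b) => [|k [closed | [s /andP[trail_s size_s]]]]; [right | by left |].
  exists [::]; rewrite andbT /alt_trail /= /joins !eqxx /=.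
  by apply/forallP => b /=; case: (e0 =P b) => [<- |].
have [closes_s | open_s] := boolP (closes x ((e0, y) :: s)).
  by left; exists x, ((e0, y) :: s); rewrite /closed_alt_trail trail_s closes_s mem_head.
have [p trail_sp] := alt_trail_extend trail_s open_s.
by right; exists (rcons s p); rewrite trail_sp size_rcons ltnS.
Qed.

End AlternatingTrails.

Lemma is_CAT_relabel (V E F : finType) (ends : E -> V * V) (c : E -> bool)
    (m : E -> nat) (endsF : F -> V * V) (present : pred F) (colF : F -> bool)
    (phi : E * V -> F) x s :
  (forall p, endsF (phi p) = ends p.1) -> (forall p, colF (phi p) = c p.1) ->
  {in s &, injective phi} -> {in s, forall p, present (phi p)} -> uniq s ->
  closed_alt_trail ends c m x s -> is_CAT endsF present colF x [seq (phi p, p.2) | p <- s].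
Proof.
move=> endsE colE phi_inj phi_present uniq_s /andP[/and3P[walk_s alt_s _] closes_s].
have present_s : all (fun q => present q.1) [seq (phi p, p.2) | p <- s].
  by apply/allP => _ /mapP[q qs ->]; apply: phi_present.
have fstE t : map fst [seq (phi p, p.2) | p <- t] = map phi t by rewrite -map_comp.
have sndE t : map snd [seq (phi p, p.2) | p <- t] = map snd t by rewrite -map_comp.
rewrite /is_CAT -walk_zipE (walk_relabel _ _ endsE) fstE sndE map_inj_in_uniq //.
case: s walk_s alt_s closes_s uniq_s present_s {phi_inj phi_present} => // p s.
rewrite /closes /= => -> alt_s /andP[-> last_col] -> -> /=.
rewrite path_map last_map !colE -(last_map fst) last_col andbT.
rewrite -(eq_path (e := relpre fst (fun a b => c a != c b))) -?path_map //.
by move=> a b /=; rewrite !colE.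
Qed.

Lemma fst_count_gt1 (T1 T2 : eqType) (s : seq (T1 * T2)) b w w' :
  (b, w) \in s -> (b, w') \in s -> w != w' -> 1 < count_mem b (map fst s).
Proof.
move=> bws bw's ww'; rewrite count_map -size_filter.
apply: (@uniq_leq_size _ [:: (b, w); (b, w')]) => [|q].
  by rewrite /= inE xpair_eqE eqxx /= ww'.
by rewrite !inE mem_filter => /orP[]/eqP->; rewrite /= eqxx.
Qed.

Section Difference.
Variables (V E : finType) (ends : E -> V * V) (col : E -> bool).
Hypothesis noloop : forall e, (ends e).1 != (ends e).2.
Variables (l u f g : E -> nat).
Hypotheses (f_alt : alternating ends col f) (g_alt : alternating ends col g).

Definition diff_col b := if f b < g b then col b else ~~ col b.
Definition diff_mult b := (g b - f b) + (f b - g b).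

(* Edgewise, [diff_col * diff_mult + (f on red, g on blue)] equals
   [~~ diff_col * diff_mult + (g on red, f on blue)]; summing around a vertex,
   the balance of f and g cancels the second terms. *)
Lemma alternating_diff : alternating ends diff_col diff_mult.
Proof.
move=> w.
have sum_mul (q : pred E) (h : E -> nat) :
    \sum_(b | incident ends b w && q b) h b = \sum_(b | incident ends b w) (q b * h b).
  by rewrite big_mkcondr; apply: eq_bigr => b _; case: (q b); rewrite ?mul1n.
have sum_if (h k : E -> nat) :
    \sum_(b | incident ends b w) (if col b then h b else k b)
    = \sum_(b | incident ends b w && col b) h b + \sum_(b | incident ends b w && ~~ col b) k b.
  rewrite (bigID col) /=; congr (_ + _); apply: eq_bigr => b /andP[_ cb].
    by rewrite cb.
  by rewrite (negPf cb).
have edgewise :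
    \sum_(b | incident ends b w) (diff_col b * diff_mult b + (if col b then f b else g b))
    = \sum_(b | incident ends b w) (~~ diff_col b * diff_mult b + (if col b then g b else f b)).
  apply: eq_bigr => b _; rewrite /diff_col /diff_mult.
  by case: (col b); case: (ltnP (f b) (g b)) => /=; lia.
rewrite !big_split /= !sum_if f_alt g_alt in edgewise.
rewrite !sum_mul; lia.
Qed.

Hypothesis g_feasible : feasible l u g.

Definition res_copy (b : E) (back : bool) : 'I_4 :=
  inord (if f b < g b then back : nat else back.+2).

Lemma res_copy_val b back :
  val (res_copy b back) = if f b < g b then back : nat else back.+2.
Proof. by rewrite /= inordK //; case: back; case: (f b < g b). Qed.

Lemma res_CAT_of_diff_trail x s e0 :
  closed_alt_trail ends diff_col diff_mult x s -> uniq s -> e0 \in map fst s ->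
  res_CAT_through ends col l u f (e0, res_copy e0 false).
Proof.
move=> trail_s uniq_s e0s; have /andP[/and3P[walk_s _ /forallP cap_s] _] := trail_s.
pose dir b := (head (b, (ends b).2) [seq p <- s | p.1 == b]).2.
have dir_mem p : p \in s -> (p.1, dir p.1) \in s.
  move=> ps; have : p \in [seq q <- s | q.1 == p.1] by rewrite mem_filter eqxx.
  rewrite /dir; case def_t: [seq q <- s | _] => [|q t] //= _.
  have : q \in [seq q <- s | q.1 == p.1] by rewrite def_t mem_head.
  by rewrite mem_filter => /andP[/eqP <-]; rewrite -surjective_pairing.
pose psi p := (p.1, res_copy p.1 (p.2 != dir p.1)).
exists x, [seq (psi p, p.2) | p <- s]; apply/andP; split.
  apply: (is_CAT_relabel (m := diff_mult)) trail_s => //.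
  - move=> [b w]; rewrite /res_col /= res_copy_val /diff_col.
    by case: (f b < g b); case: (w != dir b).
  - move=> [b w] [b' w'] bws b'w's [/= eq_b]; subst b'.
    move=> /(congr1 val); rewrite !res_copy_val => same_side; congr (_, _).
    apply: (incident_eq noloop (walk_incident walk_s bws) (walk_incident walk_s b'w's)
                        (walk_incident walk_s (dir_mem _ bws))).
    by move: same_side; case: (f b < g b); case: (w != _); case: (w' != _).
  - move=> [b w] bws; rewrite /res_present /= res_copy_val.
    have used : 0 < count_mem b (map fst s) by rewrite -has_count has_pred1 (map_f fst bws).
    have twice : w != dir b -> 1 < count_mem b (map fst s).
      exact: fst_count_gt1 bws (dir_mem _ bws).
    move: (cap_s b) (g_feasible b) used twice; rewrite /diff_mult.
    by case: (w != dir b); case: (ltnP (f b) (g b)) => /=; move: (count_mem b _) => n; lia.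
case/mapP: e0s => p ps e0E; apply/mapP; exists (psi (e0, dir e0), dir e0).
  by apply: map_f; rewrite e0E; apply: dir_mem.
by rewrite /psi /= eqxx.
Qed.

End Difference.

Theorem theorem3p2 (V E : finType) (ends : E -> V * V) (col : E -> bool)
  (noloop : forall e : E, (ends e).1 != (ends e).2)
  (l u : E -> nat) (hlu : forall e : E, l e <= u e)
  (f : E -> nat) (hf : alternating ends col f)
  (hinf : ~ feasible l u f)
  (hex : exists g : E -> nat, alternating ends col g /\ feasible l u g) :
  forall e : E,
    (f e < l e -> res_CAT_through ends col l u f (e, @Ordinal 4 0 isT)) /\
    (u e < f e -> res_CAT_through ends col l u f (e, @Ordinal 4 2 isT)).
Proof.
move=> e; have [g [g_alt g_feasible]] := hex.
have through : f e != g e -> res_CAT_through ends col l u f (e, res_copy f g e false).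
  move=> fg; have : 0 < diff_mult f g e by rewrite /diff_mult; lia.
  case/(closed_alt_trail_through noloop (alternating_diff hf g_alt)) => x [s /andP[trail_s es]].
  have [x' [s' /and3P[trail_s' es' uniq_s']]] := closed_alt_trail_uniq noloop trail_s es.
  exact: (res_CAT_of_diff_trail noloop g_feasible trail_s' uniq_s' es').
have := g_feasible e; split=> bound.
- have fg : f e < g e by lia.
  suff <- : res_copy f g e false = Ordinal (isT : 0 < 4) by apply: through; lia.
  by apply: val_inj; rewrite res_copy_val fg.
- have gf : f e < g e = false by apply/negbTE; lia.
  suff <- : res_copy f g e false = Ordinal (isT : 2 < 4) by apply: through; lia.
  by apply: val_inj; rewrite res_copy_val gf.
Qed.
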